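(* There exist bounding sequences $(n_k^-)_{k\in\omega},(n_k^+)_{k\in\omega}$ and a modified suitable family $\mathcal{F}=\{(a_\alpha,d_\alpha,b_\alpha,g_\alpha,c_\alpha,h_\alpha,e_\alpha,u_\alpha):\alpha\in2^\omega\}$ with respect to them, indexed by $2^\omega$ (so of size continuum, with distinct indices giving distinct tuples).
   Context: Slalom notation: for $c,h\in\omega^\omega$, $c^{\triangledown h}(n)=|[c(n)]^{\le h(n)}|$ (number of subsets of $\{0,\dots,c(n)-1\}$ of size $\le h(n)$). Auxiliary functions: $g_{c,h}(k)=\lfloor\log_2c(n)\rfloor$ for $k\in J_n$, where $\langle J_n\rangle$ is the partition of $\omega$ into consecutive intervals with $|J_n|=h(n)$; $f_{b,g}(k)=\sum_{l\le n}\lceil\log_2b(l)\rceil$ for $k\in I_n$, where $\langle I_n\rangle$ is the consecutive interval partition with $|I_n|=g(n)$; for increasing $f$, $e_f(k)=\min\{n:k<f(2^n)\}$. Bounding sequences: $(n_k^-),(n_k^+)$ natural numbers $\ge2$ with $n_k^-n_k^+<n_{k+1}^-$ for all $k$ and $\lim_k\log_{n_k^-}n_k^+=\infty$. Modified suitable family w.r.t. them: a family of tuples of functions in $\omega^\omega$ ($a,d,b,g,c,h,u$ increasing, $e$ nondecreasing) such that for all $\alpha\in A$: (S1) for all $k$, each of $a_\alpha(k),d_\alpha(k),b_\alpha(k),g_\alpha(k),b_\alpha^{\triangledown g_\alpha}(k),b_\alpha(k)/g_\alpha(k),h_\alpha(k),c_\alpha^{\triangledown h_\alpha}(k)$ lies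 in $[n_k^-,n_k^+]$; (S2) $h_\alpha<c_\alpha$ pointwise and $\limsup_k\frac{1}{d_\alpha(k)}\log_{d_\alpha(k)}(h_\alpha(k)+1)=\infty$; (S3) $b_\alpha/g_\alpha\ge d_\alpha$ pointwise; (S4) $a_\alpha\ge b_\alpha^{\triangledown g_\alpha}$ pointwise; (S7) for all $\beta\in A$, $\beta\ne\alpha$: $\lim_k\min\{c_\beta^{\triangledown h_\beta}(k)/d_\alpha(k),\ a_\alpha(k)/d_\beta(k)\}=0$; (MS1) $e_\alpha=e_{u_\alpha}$; (MS2) $e_\alpha(g_{c_\alpha,h_\alpha}(k))\ge2\log_2k$ for all $k\ge1$; (MS3) $f_{b_\alpha,g_\alpha}\le u_\alpha$ pointwise. *)

From mathcomp Require Import all_boot.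
From Stdlib Require Import Reals.

Set Implicit Arguments.
Unset Strict Implicit.
Unset Printing Implicit Defensive.

Definition incr (f : nat -> nat) : Prop := forall n, (f n < f n.+1)%N.
Definition nondecr (f : nat -> nat) : Prop := forall n, (f n <= f n.+1)%N.

(* c^{\triangledown h}(n) = |[c(n)]^{<= h(n)}| = sum_{i <= h(n)} binom(c(n), i) *)
Definition slalom_count (c h : nat -> nat) (n : nat) : nat :=
  (\sum_(i < (h n).+1) 'C(c n, i))%N.

(* partial sums S_h(n) = sum_{l<n} h(l): the interval J_n = [S_h n, S_h (n+1)) *)
Definition psum (h : nat -> nat) (n : nat) : nat := (\sum_(l < n) h l)%N.

(* the index n of the interval J_n (|J_l| = h l, consecutive) containing k:
   the least n with k < S_h(n+1).  When h(l) >= 1 for all l this n is <= k,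
   so the bounded search below computes it exactly. *)
Definition blk (h : nat -> nat) (k : nat) : nat :=
  find (fun n => (k < psum h n.+1)%N) (iota 0 k.+1).

Definition g_aux (c h : nat -> nat) (k : nat) : nat := trunc_log 2 (c (blk h k)).

Definition f_aux (b g : nat -> nat) (k : nat) : nat :=
  (\sum_(l < (blk g k).+1) up_log 2 (b l))%N.

(* e_f(k) = min { n : k < f(2^n) }; for strictly increasing f, f(2^k) > k,
   so the minimum is <= k and the bounded search computes it exactly. *)
Definition e_aux (f : nat -> nat) (k : nat) : nat :=
  find (fun n => (k < f (2 ^ n))%N) (iota 0 k.+1).

Definition log_base (b x : R) : R := (ln x / ln b)%R.
Definition log2 (x : R) : R := (ln x / ln 2)%R.

Definition bounding_seqs (nm np : nat -> nat) : Prop :=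
  (forall k, 2 <= nm k)%N /\ (forall k, 2 <= np k)%N /\
  (forall k, nm k * np k < nm k.+1)%N /\
  cv_infty (fun k => log_base (INR (nm k)) (INR (np k))).

Record tuple8 := Tuple8 {
  ta : nat -> nat; td : nat -> nat; tb : nat -> nat; tg : nat -> nat;
  tc : nat -> nat; th : nat -> nat; te : nat -> nat; tu : nat -> nat }.

Definition in_bounds (nm np : nat -> nat) (k x : nat) : Prop :=
  (nm k <= x <= np k)%N.

Definition single_conds (nm np : nat -> nat) (t : tuple8) : Prop :=
  let a := ta t in let d := td t in let b := tb t in let g := tg t in
  let c := tc t in let h := th t in let e := te t in let u := tu t in
  incr a /\ incr d /\ incr b /\ incr g /\ incr c /\ incr h /\ incr u /\ nondecr e /\
  (* (S1) *)
  (forall k,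
     in_bounds nm np k (a k) /\ in_bounds nm np k (d k) /\
     in_bounds nm np k (b k) /\ in_bounds nm np k (g k) /\
     in_bounds nm np k (slalom_count b g k) /\
     (INR (nm k) <= INR (b k) / INR (g k) <= INR (np k))%R /\
     in_bounds nm np k (h k) /\ in_bounds nm np k (slalom_count c h k)) /\
  (* (S2) *)
  (forall k, (h k < c k)%N) /\
  (forall (M : R) (N : nat), exists k, (N <= k)%N /\
     (M < / INR (d k) * log_base (INR (d k)) (INR (h k + 1)))%R) /\
  (* (S3) *)
  (forall k, (INR (b k) / INR (g k) >= INR (d k))%R) /\
  (* (S4) *)
  (forall k, (a k >= slalom_count b g k)%N) /\
  (* (MS1) *)
  (forall k, e k = e_aux u k) /\
  (* (MS2) *)
  (forall k, (1 <= k)%N -> (INR (e (g_aux c h k)) >= 2 * log2 (INR k))%R) /\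
  (* (MS3) *)
  (forall k, (f_aux b g k <= u k)%N).

(* (S7) for two distinct members alpha, beta *)
Definition pair_cond (ta_ tb_ : tuple8) : Prop :=
  Un_cv (fun k => Rmin (INR (slalom_count (tc tb_) (th tb_) k) / INR (td ta_ k))
                       (INR (ta ta_ k) / INR (td tb_ k))) 0.

Definition modified_suitable_family (A : Type) (nm np : nat -> nat)
    (F : A -> tuple8) : Prop :=
  (forall alpha, single_conds nm np (F alpha)) /\
  (forall alpha beta, beta <> alpha -> pair_cond (F alpha) (F beta)).

From mathcomp Require Import all_boot.
From Stdlib Require Import Reals.
From Stdlib Require Import Lra FunctionalExtensionality Classical.
(* Re-imported so that the ssrnat notations take precedence over those of Reals. *)
From mathcomp Require Import all_boot zify.

(* At level k we fix 2^k + 1 seeds D_0 < D_1 < ... < D_(2^k) inside the band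
   [n_k^-, n_k^+], and alpha uses at level k the seed D_p whose index p is the
   binary code of alpha restricted to k.  Every value of the tuple generated by
   a seed D lies in [D, top D], and the next seed is (k+1) top D, so whenever the
   codes of alpha and beta differ at level k one of the two ratios of (S7) is at
   most 1/(k+1); distinct alpha, beta have distinct codes from some level on.
   The remaining conditions concern a single seed and are checked directly; for
   (MS2) the point is that g_(c,h)(k) = floor(log2 c(n)) = (n+2) b(n) is larger
   than u(4 k^2), where n is the block of k. *)

Lemma find_iota0_le (P : pred nat) m j : P j -> find P (iota 0 m) <= j.
Proof.
move=> Pj; case: (ltnP j m) => hj.
  rewrite leqNgt; apply/negP => /(before_find 0).
  by rewrite nth_iota // add0n Pj.
by apply: leq_trans (find_size _ _) _; rewrite size_iota.
Qed.

Lemma find_iota0_spec (P : pred nat) m j : j < m -> P j -> P (find P (iota 0 m)).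
Proof.
move=> hj Pj.
have hasP : has P (iota 0 m) by apply/hasP; exists j => //; rewrite mem_iota.
have := nth_find 0 hasP; rewrite nth_iota ?add0n //.
by move: hasP; rewrite has_find size_iota.
Qed.

Lemma incr_homo [f] : incr f -> {homo f : m n / m <= n}.
Proof. by move=> f_incr; apply: (homo_leq leqnn leq_trans) => n; apply: ltnW. Qed.

Lemma incr_ge_id [f] : incr f -> forall n, n <= f n.
Proof. by move=> f_incr; elim=> // n IH; apply: leq_ltn_trans IH (f_incr n). Qed.

Lemma psumS h n : psum h n.+1 = psum h n + h n.
Proof. by rewrite /psum big_ord_recr. Qed.

Lemma psum_homo h : {homo psum h : m n / m <= n}.
Proof.
by apply: (homo_leq leqnn leq_trans) => n; rewrite psumS leq_addr.
Qed.

Lemma psum_le_mul h n B : (forall l, l < n -> h l <= B) -> psum h n <= n * B.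
Proof.
move=> hB; apply: leq_trans (_ : \sum_(l < n) B <= _).
  by apply: leq_sum => l _; apply: hB.
by rewrite sum_nat_const card_ord.
Qed.

Lemma psum_ge_id h k : (forall l, 0 < h l) -> k <= psum h k.
Proof. by move=> h_pos; elim: k => // k IH; rewrite psumS; have := h_pos k; lia. Qed.

Lemma blk_le h k n : k < psum h n.+1 -> blk h k <= n.
Proof. exact: (find_iota0_le (fun n => k < psum h n.+1)). Qed.

Lemma ltn_psum_blk [h] k : (forall l, 0 < h l) -> k < psum h (blk h k).+1.
Proof.
move=> h_pos; apply: (find_iota0_spec (fun n => k < psum h n.+1)) (ltnSn k) _.
exact: psum_ge_id.
Qed.

Lemma blk_homo [h] : (forall l, 0 < h l) -> {homo blk h : k k' / k <= k'}.
Proof.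
move=> h_pos k k' le_kk'; apply: blk_le.
by have := ltn_psum_blk k' h_pos; lia.
Qed.

Lemma f_aux_homo b [g] : (forall l, 0 < g l) -> {homo f_aux b g : k k' / k <= k'}.
Proof.
move=> g_pos k k' /(blk_homo g_pos) le_blk.
by apply: (psum_homo (fun l => up_log 2 (b l))); rewrite ltnS.
Qed.

Lemma f_aux_le_mul b g k B :
  (forall l, l <= blk g k -> up_log 2 (b l) <= B) -> f_aux b g k <= (blk g k).+1 * B.
Proof. by move=> hB; apply: (psum_le_mul (fun l => up_log 2 (b l))) => l; apply: hB. Qed.

Lemma Nat_pow_expn m n : Nat.pow m n = m ^ n.
Proof. by elim: n => // n IH; rewrite expnS -IH. Qed.

Lemma e_auxE u k : e_aux u k = find (fun n => k < u (2 ^ n)) (iota 0 k.+1).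
Proof. by apply: eq_find => n; rewrite Nat_pow_expn. Qed.

Lemma ltn_u_e_aux [u] : incr u -> forall k, k < u (2 ^ e_aux u k).
Proof.
move=> u_incr k; rewrite e_auxE; apply: (find_iota0_spec (fun n => k < u (2 ^ n))) (ltnSn k) _.
exact: leq_trans (ltn_expl k (isT : 1 < 2)) (incr_ge_id u_incr _).
Qed.

Lemma e_aux_nondecr [u] : incr u -> nondecr (e_aux u).
Proof.
move=> u_incr k; rewrite [e_aux u k]e_auxE.
by apply: (find_iota0_le (fun n => k < u (2 ^ n))); apply: ltnW; apply: ltn_u_e_aux.
Qed.

Lemma e_aux_ge [u] m x : incr u -> u (2 ^ m) <= x -> m <= e_aux u x.
Proof.
move=> u_incr hm; rewrite leqNgt; apply/negP => /ltnW lt_em.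
have : u (2 ^ e_aux u x) <= u (2 ^ m) by apply: incr_homo; rewrite ?leq_pexp2l.
by have := ltn_u_e_aux u_incr x; lia.
Qed.

Lemma slalom_count_le_exp2 c h n : slalom_count c h n <= 2 ^ c n.
Proof.
rewrite /slalom_count; set m := (h n).+1; set N := c n.
rewrite -(big_mkord xpredT (fun i => 'C(N, i))).
apply: leq_trans (_ : \sum_(0 <= i < m + N.+1) 'C(N, i) <= _).
  by rewrite [X in _ <= X](@big_cat_nat _ _ _ m) ?leq_addr //= leq_addr.
rewrite (@big_cat_nat _ _ _ N.+1) ?leq_addl //=.
rewrite [X in _ + X]big1_seq; last first.
  by move=> i /andP [_]; rewrite mem_index_iota => /andP [hi _]; rewrite bin_small.
rewrite addn0 big_mkord.
have := expnDn 1 1 N; rewrite add1n => ->.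
by apply: leq_sum => i _; rewrite !exp1n !muln1.
Qed.

Lemma slalom_count_ge c h n : 0 < h n -> c n <= slalom_count c h n.
Proof. by rewrite /slalom_count; case: (h n) => // m _; rewrite !big_ord_recl /= bin1; lia. Qed.

Lemma up_log2_le n : up_log 2 n <= n.
Proof. by apply: up_log_min => //; apply: ltnW; apply: ltn_expl. Qed.

Lemma exp2_up_log_le_double [n] : 0 < n -> 2 ^ up_log 2 n <= n.*2.
Proof.
move=> n_gt0; case: (ltnP 1 n) => n_gt1; last by have -> : n = 1 by lia.
have := up_log_gtn (isT : 1 < 2) n_gt1.
have : 0 < up_log 2 n by rewrite up_log_gt0 n_gt1.
by case: (up_log 2 n) => [|j] //= _; rewrite expnS; lia.
Qed.

Open Scope R_scope.

Lemma INR_leq [m n] : (m <= n)%N -> INR m <= INR n.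
Proof. by move/leP; apply: le_INR. Qed.

Lemma INR_gt0 [n] : (0 < n)%N -> 0 < INR n.
Proof. by move/ltP; apply: lt_0_INR. Qed.

Lemma ln_INR_leq [m n] : (0 < m)%N -> (m <= n)%N -> ln (INR m) <= ln (INR n).
Proof.
move=> m_gt0; rewrite leq_eqVlt => /orP [/eqP -> | lt_mn]; first exact: Rle_refl.
by apply: Rlt_le; apply: ln_increasing; [apply: INR_gt0 | apply/lt_INR/ltP].
Qed.

Lemma ln_INR_expn x n : (0 < x)%N -> ln (INR (x ^ n)) = INR n * ln (INR x).
Proof. by move=> x_gt0; rewrite -Nat_pow_expn pow_INR ln_pow //; apply: INR_gt0. Qed.

Lemma ln_INR_gt0 [x] : (2 <= x)%N -> 0 < ln (INR x).
Proof.
move=> x_ge2; rewrite -ln_1; apply: ln_increasing; first lra.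
by have := INR_leq x_ge2; rewrite /=; lra.
Qed.

Lemma log_base_INR_ge [x y n] : (2 <= x)%N -> (x ^ n <= y)%N ->
  INR n <= log_base (INR x) (INR y).
Proof.
move=> x_ge2 hy; have lx := ln_INR_gt0 x_ge2.
have : INR n * ln (INR x) <= ln (INR y).
  by rewrite -ln_INR_expn; [apply: ln_INR_leq => //; rewrite expn_gt0 | ]; lia.
by rewrite /log_base => hle; apply: (Rmult_le_reg_r (ln (INR x))) => //; field_simplify; lra.
Qed.

Lemma log_base_INR_le [x y n] : (2 <= x)%N -> (0 < y)%N -> (y <= x ^ n)%N ->
  log_base (INR x) (INR y) <= INR n.
Proof.
move=> x_ge2 y_gt0 hy; have lx := ln_INR_gt0 x_ge2.
have : ln (INR y) <= INR n * ln (INR x).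
  by rewrite -ln_INR_expn; [apply: ln_INR_leq | lia].
by rewrite /log_base => hle; apply: (Rmult_le_reg_r (ln (INR x))) => //; field_simplify; lra.
Qed.

Lemma INR_ratio_le x y k : (0 < y)%N -> (k.+1 * x <= y)%N -> INR x / INR y <= / INR k.+1.
Proof.
move=> y_gt0 hxy; have py := INR_gt0 y_gt0; have pk := INR_gt0 (ltn0Sn k).
have : INR k.+1 * INR x <= INR y by rewrite -mult_INR; apply: INR_leq.
move=> hle; apply: (Rmult_le_reg_r (INR y * INR k.+1)); first exact: Rmult_lt_0_compat.
by field_simplify; lra.
Qed.

Close Scope R_scope.

(* Where the formulas come from:
   the exponent D(k+1) of h gives (1/d) log_d (h+1) >= k+1 for (S2); the factor
   4(k+1)^2 h^2 of g exceeds 4 k'^2 for every k' in the first k+1 blocks J_n,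
   which is what (MS2) needs; b = D g makes b/g = d for (S3); floor(log2 c) =
   (k+2) b bounds u for (MS2), and 2^b <= c bounds a = b^(triangledown g); finally
   c^(triangledown h) <= 2^c = top, and the next seed is (k+1) top for (S7). *)
Definition h_of k D := D ^ (D * k.+1).
Definition g_of k D := 4 * (k.+1 * k.+1) * (h_of k D * h_of k D) + 1.
Definition b_of k D := D * g_of k D.
Definition c_of k D := 2 ^ (k.+2 * b_of k D).
Definition top_of k D := 2 ^ c_of k D.
Definition next_seed k D := k.+1 * top_of k D.

Lemma leq_h_of k [D] : 0 < D -> D <= h_of k D.
Proof. by move=> D_gt0; rewrite /h_of -{1}(expn1 D) leq_pexp2l // muln_gt0 D_gt0. Qed.

Lemma h_of_lt_g_of k [D] : 0 < D -> h_of k D < g_of k D.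
Proof. by move=> D_gt0; have := leq_h_of k D_gt0; rewrite /g_of; nia. Qed.

Lemma g_of_le_b_of k [D] : 0 < D -> g_of k D <= b_of k D.
Proof. by move=> D_gt0; rewrite /b_of leq_pmull. Qed.

Lemma exp2_b_of_le_c_of k D : 2 ^ b_of k D <= c_of k D.
Proof. by rewrite /c_of leq_pexp2l // leq_pmull. Qed.

Lemma b_of_lt_c_of k D : b_of k D < c_of k D.
Proof. exact: leq_trans (ltn_expl _ (isT : 1 < 2)) (exp2_b_of_le_c_of k D). Qed.

Lemma c_of_lt_top_of k D : c_of k D < top_of k D.
Proof. exact: ltn_expl. Qed.

Lemma top_of_le_next_seed k D : top_of k D <= next_seed k D.
Proof. by rewrite /next_seed leq_pmull. Qed.

Lemma seed_block_chain k [D] : 0 < D ->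
  [/\ D <= h_of k D, h_of k D < g_of k D, g_of k D <= b_of k D,
      b_of k D < c_of k D & c_of k D < top_of k D].
Proof.
move=> D_gt0; split; [exact: leq_h_of | exact: h_of_lt_g_of | exact: g_of_le_b_of |
  exact: b_of_lt_c_of | exact: c_of_lt_top_of].
Qed.

Lemma ltn_next_seed k [D] : 0 < D -> D < next_seed k D.
Proof.
move=> D_gt0; have [? ? ? ? ?] := seed_block_chain k D_gt0.
by have := top_of_le_next_seed k D; lia.
Qed.

(* The iterate is [nplus k'], so that n_(k+1)^- = n_k^- n_k^+ + 1. *)
Fixpoint nminus k :=
  if k is k'.+1 then nminus k' * iter (2 ^ k') (next_seed k') (nminus k') + 1 else 2.
Definition seed k p := iter p (next_seed k) (nminus k).
Definition nplus k := seed k (2 ^ k).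

Lemma nminus_gt0 k : 0 < nminus k.
Proof. by case: k => //= k; rewrite addn1. Qed.

Lemma seed_ltn_homo k : {homo seed k : p q / p < q}.
Proof.
apply: (homo_ltn ltn_trans) => p; apply: ltn_next_seed.
by elim: p => [|p IH]; [exact: nminus_gt0 | exact: ltn_trans IH (ltn_next_seed k IH)].
Qed.

Lemma seed_homo k : {homo seed k : p q / p <= q}.
Proof. exact/ltnW_homo/seed_ltn_homo. Qed.

Lemma nminus_le_seed k p : nminus k <= seed k p.
Proof. exact: (seed_homo k 0 p (leq0n p)). Qed.

Lemma nminus_le_nplus k : nminus k <= nplus k.
Proof. exact: nminus_le_seed. Qed.

Lemma nminus_ge2 k : 2 <= nminus k.
Proof.
case: k => // k; rewrite -[nminus k.+1]/(nminus k * nplus k + 1).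
by have := nminus_gt0 k; have := nminus_le_nplus k; nia.
Qed.

Lemma nminus_mul_nplus_lt k : nminus k * nplus k < nminus k.+1.
Proof. by rewrite /= addn1. Qed.

Lemma nminus_expn_le_nplus k : nminus k ^ k.+1 <= nplus k.
Proof.
have n_gt0 := nminus_gt0 k.
apply: leq_trans (_ : h_of k (nminus k) <= _).
  by rewrite leq_pexp2l ?leq_pmull ?nminus_ge2.
apply: leq_trans (_ : next_seed k (nminus k) <= _); last first.
  by apply: (seed_homo k 1); rewrite expn_gt0.
have [_ ? ? ? ?] := seed_block_chain k n_gt0.
by have := top_of_le_next_seed k (nminus k); lia.
Qed.

Lemma in_bounds_seed_block [k p] : p < 2 ^ k -> forall x,
  seed k p <= x <= top_of k (seed k p) -> in_bounds nminus nplus k x.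
Proof.
move=> lt_p x /andP [lo hi]; rewrite /in_bounds (leq_trans (nminus_le_seed k p) lo) /=.
by apply: leq_trans hi (leq_trans (top_of_le_next_seed _ _) (seed_homo k _ _ lt_p)).
Qed.

Lemma incr_of_in_bounds f : (forall k, in_bounds nminus nplus k (f k)) -> incr f.
Proof.
move=> hf k; have /andP [_ hi] := hf k; have /andP [lo _] := hf k.+1.
by have := nminus_mul_nplus_lt k; have := nminus_gt0 k; nia.
Qed.

Fixpoint bin_code (al : nat -> bool) k :=
  if k is k'.+1 then (bin_code al k').*2 + al k' else 0.

Lemma bin_code_lt al k : bin_code al k < 2 ^ k.
Proof. by elim: k => [|k IH] //=; rewrite expnS; case: (al k) => /=; lia. Qed.

Lemma bin_code_inj al be k :
  bin_code al k = bin_code be k -> forall i, i < k -> al i = be i.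
Proof.
elim: k => [|k IH] //= E i.
have [Ek Eal] : bin_code al k = bin_code be k /\ al k = be k.
  by move: E; case: (al k); case: (be k) => /=; lia.
by rewrite ltnS leq_eqVlt => /orP [/eqP -> | ]; [| apply: IH].
Qed.

Definition d_fam al k := seed k (bin_code al k).
Definition h_fam al k := h_of k (d_fam al k).
Definition g_fam al k := g_of k (d_fam al k).
Definition b_fam al k := b_of k (d_fam al k).
Definition c_fam al k := c_of k (d_fam al k).
Definition a_fam al := slalom_count (b_fam al) (g_fam al).
(* The summand k makes u strictly increasing; f_(b,g) is only nondecreasing. *)
Definition u_fam al k := f_aux (b_fam al) (g_fam al) k + k.

Definition family al :=
  Tuple8 (a_fam al) (d_fam al) (b_fam al) (g_fam al) (c_fam al) (h_fam al)
    (e_aux (u_fam al)) (u_fam al).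

Section OneMember.

Variable al : nat -> bool.

Lemma d_fam_ge2 k : 2 <= d_fam al k.
Proof. exact: leq_trans (nminus_ge2 k) (nminus_le_seed _ _). Qed.

Let d_gt0 k : 0 < d_fam al k := ltnW (d_fam_ge2 k).

Lemma next_seed_le_d_fam [be k] : bin_code al k < bin_code be k ->
  next_seed k (d_fam al k) <= d_fam be k.
Proof. exact: (seed_homo k (bin_code al k).+1). Qed.

Lemma g_fam_gt0 k : 0 < g_fam al k.
Proof. by rewrite /g_fam /g_of addn1. Qed.

Lemma a_fam_bounds k : b_fam al k <= a_fam al k <= c_fam al k.
Proof.
rewrite slalom_count_ge ?g_fam_gt0 //=.
exact: leq_trans (slalom_count_le_exp2 _ _ _) (exp2_b_of_le_c_of _ _).
Qed.

Lemma slalom_c_h_bounds k :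
  c_fam al k <= slalom_count (c_fam al) (h_fam al) k <= top_of k (d_fam al k).
Proof.
rewrite slalom_count_ge ?slalom_count_le_exp2 //.
exact: leq_trans (d_gt0 k) (leq_h_of k (d_gt0 k)).
Qed.

Lemma h_fam_lt_c_fam k : h_fam al k < c_fam al k.
Proof.
by have [_ ? ? ? _] := seed_block_chain k (d_gt0 k); rewrite /h_fam /c_fam; lia.
Qed.

Let ib := in_bounds nminus nplus.

Lemma fam_in_bounds k :
  ib k (a_fam al k) /\ ib k (d_fam al k) /\ ib k (b_fam al k) /\ ib k (g_fam al k) /\
  ib k (c_fam al k) /\ ib k (h_fam al k) /\ ib k (slalom_count (c_fam al) (h_fam al) k).
Proof.
have D_gt0 := d_gt0 k.
have : d_fam al k <= h_fam al k := leq_h_of k D_gt0.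
have : h_fam al k < g_fam al k := h_of_lt_g_of k D_gt0.
have : g_fam al k <= b_fam al k := g_of_le_b_of k D_gt0.
have : b_fam al k < c_fam al k := b_of_lt_c_of k _.
have : c_fam al k < top_of k (d_fam al k) := c_of_lt_top_of k _.
have /andP [? ?] := a_fam_bounds k; have /andP [? ?] := slalom_c_h_bounds k.
move=> *; repeat split; apply: (in_bounds_seed_block (bin_code_lt al k)).
all: by rewrite -/(d_fam al k); apply/andP; split; lia.
Qed.

Lemma fam_incr : incr (a_fam al) /\ incr (d_fam al) /\ incr (b_fam al) /\
  incr (g_fam al) /\ incr (c_fam al) /\ incr (h_fam al).
Proof. by repeat split; apply: incr_of_in_bounds => k; have := fam_in_bounds k; tauto. Qed.

Lemma h_fam_gt0 k : 0 < h_fam al k.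
Proof. exact: leq_trans (d_gt0 k) (leq_h_of k (d_gt0 k)). Qed.

Lemma u_fam_incr : incr (u_fam al).
Proof.
move=> k; have := f_aux_homo (b_fam al) g_fam_gt0 _ _ (leqnSn k).
by rewrite /u_fam; lia.
Qed.

Lemma g_aux_fam k : let n := blk (h_fam al) k in
  g_aux (c_fam al) (h_fam al) k = n.+2 * b_fam al n.
Proof. by rewrite /g_aux /c_fam /c_of trunc_expnK. Qed.

Lemma u_fam_le n x : x < g_fam al n -> u_fam al x <= n.+2 * b_fam al n.
Proof.
move=> lt_x; have le_gb : g_fam al n <= b_fam al n := g_of_le_b_of n (d_gt0 n).
have [_ [_ [b_incr _]]] := fam_incr.
have le_blk : blk (g_fam al) x <= n by apply: blk_le; rewrite psumS; lia.
have : f_aux (b_fam al) (g_fam al) x <= (blk (g_fam al) x).+1 * b_fam al n.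
  apply: f_aux_le_mul => l le_l; apply: leq_trans (up_log2_le _) _.
  by apply: incr_homo b_incr _ _ (leq_trans le_l le_blk).
by rewrite /u_fam; nia.
Qed.

Lemma MS2_fam_nat [k] : 0 < k ->
  (up_log 2 k).*2 <= e_aux (u_fam al) (g_aux (c_fam al) (h_fam al) k).
Proof.
move=> k_gt0; rewrite g_aux_fam; set n := blk (h_fam al) k.
apply: (e_aux_ge _ _ u_fam_incr); apply: u_fam_le.
have [_ [_ [_ [_ [_ h_incr]]]]] := fam_incr.
have lt_k : k < n.+1 * h_fam al n.
  apply: leq_trans (ltn_psum_blk k h_fam_gt0) _; apply: psum_le_mul => l lt_l.
  by apply: incr_homo h_incr _ _ _; rewrite -ltnS.
have : 2 ^ (up_log 2 k).*2 <= k.*2 * k.*2.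
  by rewrite -addnn expnD; apply: leq_mul; apply: exp2_up_log_le_double.
by rewrite /g_fam /g_of -/(h_fam al n); nia.
Qed.

Open Scope R_scope.

Lemma MS2_fam k : (1 <= k)%N ->
  INR (e_aux (u_fam al) (g_aux (c_fam al) (h_fam al) k)) >= 2 * log2 (INR k).
Proof.
move=> k_gt0; have := INR_leq (MS2_fam_nat k_gt0); rewrite -addnn plus_INR.
have := log_base_INR_le (isT : (2 <= 2)%N) k_gt0 (up_logP k (isT : (1 < 2)%N)).
have -> : INR 2 = 2 by rewrite /=; lra.
by rewrite /log_base /log2; lra.
Qed.

Lemma S2_fam (M : R) (N : nat) : exists k, (N <= k)%N /\
  M < / INR (d_fam al k) * log_base (INR (d_fam al k)) (INR (h_fam al k + 1)).
Proof.
have [n0 hn0] := INR_unbounded M; exists (N + n0)%N; split; first exact: leq_addr.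
set k := (N + n0)%N; have D_ge2 := d_fam_ge2 k; set D := d_fam al k in D_ge2 *.
have pD := INR_gt0 (ltnW D_ge2).
have hlog := log_base_INR_ge D_ge2 (leq_addr 1 (h_fam al k)).
have hk : INR n0 <= INR k.+1 by apply: INR_leq; rewrite /k; lia.
rewrite mult_INR in hlog.
apply: Rlt_le_trans (_ : / INR D * (INR D * INR k.+1) <= _).
  by rewrite -Rmult_assoc Rinv_l; lra.
by apply: Rmult_le_compat_l => //; left; apply: Rinv_0_lt_compat.
Qed.

Lemma b_div_g_fam k : INR (b_fam al k) / INR (g_fam al k) = INR (d_fam al k).
Proof.
have := INR_gt0 (g_fam_gt0 k); rewrite /b_fam /b_of mult_INR -/(g_fam al k).
by move=> hg; field; lra.
Qed.

Close Scope R_scope.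

Lemma single_conds_family : single_conds nminus nplus (family al).
Proof.
rewrite /single_conds /=; have [? [? [? [? [? ?]]]]] := fam_incr.
do 6 (split; first done).
split; first exact: u_fam_incr.
split; first exact: e_aux_nondecr u_fam_incr.
split.
  move=> k; have [? [hd [? [? [? [? ?]]]]]] := fam_in_bounds k.
  have /andP [lo hi] := hd; rewrite b_div_g_fam.
  by do 5 (split=> //); split=> //; split; apply: INR_leq.
split; first exact: h_fam_lt_c_fam.
split; first exact: S2_fam.
split; first by move=> k; rewrite b_div_g_fam; right.
split; first by [].
split; first by [].
split; first exact: MS2_fam.
by move=> k; rewrite /u_fam leq_addr.
Qed.

End OneMember.

Open Scope R_scope.

Lemma pair_cond_family al be : be <> al -> pair_cond (family al) (family be).
Proof.
move=> ne_be_al.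
have [i ne_i] : exists i, al i <> be i.
  apply: not_all_ex_not => eq_al_be; apply: ne_be_al.
  by apply: functional_extensionality => x; rewrite eq_al_be.
move=> eps eps_gt0; have [n0 hn0] := INR_unbounded (/ eps).
exists (i.+1 + n0)%N => n /leP le_n; rewrite /R_dist Rminus_0_r /=.
have da := d_fam_ge2 al n; have db := d_fam_ge2 be n.
have div_ge0 x y : (0 < y)%N -> 0 <= INR x / INR y.
  move=> y_gt0; apply: Rmult_le_pos; first exact: pos_INR.
  by left; apply: Rinv_0_lt_compat; apply: INR_gt0.
rewrite Rabs_right; last by apply: Rle_ge; apply: Rmin_glb; apply: div_ge0; lia.
have : / INR n.+1 < eps.
  rewrite -(Rinv_inv eps); apply: Rinv_lt_contravar.
    by apply: Rmult_lt_0_compat; [apply: Rinv_0_lt_compat | apply: INR_gt0].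
  by apply: Rlt_le_trans hn0 _; apply: INR_leq; lia.
apply: Rle_lt_trans.
have ne_code : bin_code al n <> bin_code be n.
  by move=> /bin_code_inj eq_code; apply: ne_i; apply: eq_code; lia.
case: (ltngtP (bin_code al n) (bin_code be n)) => [lt_ab | lt_ba | //].
- apply: Rle_trans (Rmin_r _ _) _; apply: INR_ratio_le; first lia.
  have := next_seed_le_d_fam al lt_ab; have /andP [_ le_a] := a_fam_bounds al n.
  have := c_of_lt_top_of n (d_fam al n).
  by rewrite /next_seed /c_fam in le_a *; nia.
- apply: Rle_trans (Rmin_l _ _) _; apply: INR_ratio_le; first lia.
  have := next_seed_le_d_fam be lt_ba; have /andP [_ le_s] := slalom_c_h_bounds be n.
  by rewrite /next_seed; nia.
Qed.

Lemma bounding_seqs_nminus_nplus : bounding_seqs nminus nplus.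
Proof.
split; first exact: nminus_ge2.
split; first by move=> k; exact: leq_trans (nminus_ge2 k) (nminus_le_nplus k).
split; first exact: nminus_mul_nplus_lt.
move=> M; have [n0 hn0] := INR_unbounded M; exists n0 => n /leP le_n.
have := log_base_INR_ge (nminus_ge2 n) (nminus_expn_le_nplus n).
have : INR n0 <= INR n.+1 by apply: INR_leq; lia.
lra.
Qed.

Close Scope R_scope.

Lemma d_fam_inj al be : d_fam al = d_fam be -> al = be.
Proof.
move=> E; apply: functional_extensionality => i.
have hcode : bin_code al i.+1 = bin_code be i.+1.
  have := congr1 (fun f => f i.+1) E; rewrite /d_fam.
  by case: (ltngtP (bin_code al i.+1) (bin_code be i.+1)) => // /(seed_ltn_homo i.+1) + E';
    rewrite E' ltnn.
exact: bin_code_inj hcode i (ltnSn i).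
Qed.

Theorem proposition6p7 :
  exists (nm np : nat -> nat) (F : (nat -> bool) -> tuple8),
    bounding_seqs nm np /\
    modified_suitable_family nm np F /\
    (forall alpha beta : nat -> bool, F alpha = F beta -> alpha = beta).
Proof.
exists nminus, nplus, family; split; first exact: bounding_seqs_nminus_nplus.
split; first by split; [exact: single_conds_family | exact: pair_cond_family].
by move=> al be E; apply: d_fam_inj; rewrite -[d_fam al]/(td (family al)) E.
Qed.
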